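(* Let $n$ be large, $R$ an integer with $1\le R\le\frac{\log n}{24\log\log n}$, $L=6R$ and $\eta=n^{1/(2L)}$. Let $\ell\in\{0,\ldots,L\}$ and $q$ an integer with $q\in\left[\eta^3,\frac{\eta^{2\ell-1}}{2^7}\right]$. Let $\sigma^A$ be any probability distribution with support $S_\ell^A$. If $\mu^A\sim\sigma^A$ and, conditionally on $\mu^A$, $\Theta=(\Theta_1,\ldots,\Theta_q)\sim\mathrm{Ber}(\mu^A)^{\otimes q}$, then $\Pr[\Theta\notin G_\ell^A]\le n^{-10}$.
   Context: For $\ell\in\{0,\ldots,L\}$, $S_\ell^A$ is the set of all numbers $\frac12+2\sum_{k:\,1\le2k+1\le\ell}\eta^{-(2k+1)}+2\sum_{k:\,\ell<2k+1\le L}X_{2k+1}\eta^{-(2k+1)}$ with all $X_{2k+1}\in\{0,1\}$. For $\theta\in\{0,1\}^q$ and $x\in(0,1)$, $p(\theta\mid x)=\prod_{j=1}^qx^{\theta_j}(1-x)^{1-\theta_j}$. $G_\ell^A$ is the set of sequences $\theta$ (of any length) such that for all $x,y\in S_\ell^A$, $\frac{p(\theta\mid x)}{p(\theta\mid y)}\in[e^{-4/\eta},e^{4/\eta}]$. $\mathrm{Ber}(x)$ denotes the Bernoulli distribution with mean $x$. *)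

From HB Require Import structures.
From mathcomp Require Import all_boot all_order all_algebra.
From mathcomp Require Import all_classical all_reals all_analysis.
Set Implicit Arguments. Unset Strict Implicit. Unset Printing Implicit Defensive.
Import Order.TTheory GRing.Theory Num.Theory.
Local Open Scope ring_scope.

(* S_ell^A : membership of x (eta, L, ell given). k ranges over nat with
   2k+1 <= L, hence k < L is a sufficient finite range. *)
Definition SA {R : realType} (eta : R) (L l : nat) (x : R) : Prop :=
  exists X : nat -> bool,
    x = 1/2 + 2 * (\sum_(k < L | (1 <= 2*k+1 <= l)%N) eta ^- (2*k+1))
            + 2 * (\sum_(k < L | (l < 2*k+1 <= L)%N) (X k)%:R * eta ^- (2*k+1)).

Definition plik {R : realType} {q : nat} (th : {ffun 'I_q -> bool}) (x : R) : R :=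
  \prod_(j < q) (x ^+ (th j : nat) * (1 - x) ^+ (1 - (th j : nat))).

Definition GA {R : realType} (eta : R) (L l : nat) {q : nat}
    (th : {ffun 'I_q -> bool}) : Prop :=
  forall x y : R, SA eta L l x -> SA eta L l y ->
    expR (- (4 / eta)) <= plik th x / plik th y <= expR (4 / eta).

(* Every point of S_l^A is 1/2 + A + 2 B with A fixed and 0 <= B <= 2 eta^-(l+1),
   so S_l^A sits near 1/2 and has diameter at most 4 eta^-(l+1).  Since
   log (p(th|x) / p(th|y)) <= (x - y) / (y (1 - y)) * (|th| - q y), where |th| is
   the number of ones of th, every th with | |th| - q mu | <= eta^l / 6 for some
   mu in S_l^A lies in G_l^A.  For th ~ Ber(mu)^q a Chernoff bound with
   lambda = eta^(1-l) / 2 shows that this fails with probability at most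
   2 exp (eta / 256 - eta / 12), which is below n^-10 because eta >= (ln n)^2. *)

From HB Require Import structures.
From mathcomp Require Import all_boot all_order all_algebra.
From mathcomp Require Import all_classical all_reals all_analysis.
From mathcomp Require Import lra zify ring.
Set Implicit Arguments.
Unset Strict Implicit.
Unset Printing Implicit Defensive.
Import Order.TTheory GRing.Theory Num.Theory.
Local Open Scope ring_scope.

Lemma weighted_sum_le (R : numDomainType) (T : eqType) (s : seq T) (w f : T -> R) b :
  (forall x, x \in s -> 0 <= w x) -> (forall x, x \in s -> f x <= b) ->
  \sum_(x <- s) w x = 1 -> \sum_(x <- s) w x * f x <= b.
Proof.
move=> w_ge0 f_le w_sum; rewrite -[b]mul1r -w_sum mulr_suml big_seq_cond.
rewrite [X in _ <= X]big_seq_cond; apply: ler_sum => x /andP[xs _].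
by rewrite ler_wpM2l ?w_ge0 ?f_le.
Qed.

Lemma sum_odd_powers_tail_le (R : realFieldType) (c : R) N m : 0 <= c <= 1/2 ->
  \sum_(k < N | (m < 2 * k + 1)%N) c ^+ (2 * k + 1) <= 2 * c ^+ m.+1.
Proof.
move=> /andP[c_ge0 c_le]; elim: N m => [|N IHN] m.
  by rewrite big_ord0 mulr_ge0 // exprn_ge0.
rewrite big_mkcond big_ord_recl -big_mkcond /=.
have -> : \sum_(k < N | (m < 2 * bump 0 k + 1)%N) c ^+ (2 * bump 0 k + 1)
    = c ^+ 2 * \sum_(k < N | (m - 2 < 2 * k + 1)%N) c ^+ (2 * k + 1).
  rewrite mulr_sumr; apply: eq_big => k; rewrite /bump /=.
    by apply/idP/idP; lia.
  by move=> _; rewrite -exprD; congr (_ ^+ _); lia.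
have := ler_wpM2l (exprn_ge0 2 c_ge0) (IHN (m - 2)%N).
case: m => [|[|m]] /=; rewrite ?add0r.
- rewrite !expr1 expr2; move: (\sum_(k < N | _) _) => S; nra.
- by move/le_trans; apply; rewrite !expr2 expr1; nra.
- by rewrite subSS subSS subn0 -mulrCA -exprD.
Qed.

Section ExpBounds.
Variable R : realType.

(* From [expR (- u) >= 1 - u] and [(1 + u + 2 u^2) (1 - u) = 1 + u^2 (1 - 2 u) >= 1]. *)
Lemma expR_le_quadratic (u : R) : `|u| <= 1/2 -> expR u <= 1 + u + 2 * u ^+ 2.
Proof.
rewrite ler_norml => /andP[u_ge u_le].
have Pu_ge0 : 0 <= 1 + u + 2 * u ^+ 2 by rewrite expr2; nra.
have expRu_le : expR u * (1 - u) <= 1.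
  rewrite -[X in _ <= X](mulfV (lt0r_neq0 (expR_gt0 u))) ler_pM2l ?expR_gt0 //.
  by rewrite -expRN; have := expR_ge1Dx (- u); lra.
have P_ge : 1 <= (1 + u + 2 * u ^+ 2) * (1 - u).
  have : 0 <= u ^+ 2 * (1 - 2 * u) by rewrite mulr_ge0 ?sqr_ge0 //; lra.
  rewrite expr2; nra.
have := ler_wpM2l (expR_ge0 u) P_ge; rewrite mulr1 mulrCA.
move=> /le_trans; apply; rewrite ler_piMr //.
Qed.

Lemma ln2_ge_half : 1/2 <= ln (2 : R).
Proof.
have : expR (1/2 : R) <= 2.
  have := @expR_le_quadratic (1/2); rewrite ger0_norm ?expr2; lra.
by rewrite -ler_ln ?posrE ?expR_gt0 // expRK.
Qed.

Lemma bernoulli_mgf_le (mu lam : R) : 0 <= mu <= 1 -> `|lam| <= 1/2 ->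
  mu * expR (lam * (1 - mu)) + (1 - mu) * expR (- (lam * mu)) <= expR (2 * lam ^+ 2).
Proof.
move=> /andP[mu_ge0 mu_le1] lam_le.
have e1 := @expR_le_quadratic (lam * (1 - mu)).
have e2 := @expR_le_quadratic (- (lam * mu)).
rewrite normrM (ger0_norm (_ : 0 <= 1 - mu)) ?subr_ge0 // in e1.
rewrite normrN normrM (ger0_norm mu_ge0) in e2.
have {}e1 := e1 ltac:(nra); have {}e2 := e2 ltac:(nra).
apply: le_trans (expR_ge1Dx _).
apply: le_trans (lerD (ler_wpM2l mu_ge0 e1) (ler_wpM2l _ e2)) _; first lra.
rewrite !expr2; nra.
Qed.

End ExpBounds.

Definition ones {R : realType} {q : nat} (th : {ffun 'I_q -> bool}) : R :=
  \sum_(j < q) (th j : nat)%:R.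

Section Likelihood.
Variables (R : realType) (q : nat).
Implicit Types (th : {ffun 'I_q -> bool}) (x y mu lam : R).

Lemma plik_ge0 th x : 0 <= x <= 1 -> 0 <= plik th x.
Proof.
move=> /andP[x_ge0 x_le1]; apply: prodr_ge0 => j _.
by rewrite mulr_ge0 ?exprn_ge0 ?subr_ge0.
Qed.

Lemma plik_gt0 th x : 0 < x < 1 -> 0 < plik th x.
Proof.
move=> /andP[x_gt0 x_lt1]; apply: prodr_gt0 => j _.
by rewrite mulr_gt0 // exprn_gt0 // subr_gt0.
Qed.

(* Each factor of the ratio is [x / y] or [(1 - x) / (1 - y)], i.e. [1 + t] with
   [t = (x - y) / (y (1 - y)) * (th_j - y)], and [1 + t <= expR t]. *)
Lemma plik_ratio_le th x y : 0 < x < 1 -> 0 < y < 1 ->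
  plik th x / plik th y <= expR ((x - y) / (y * (1 - y)) * (ones th - q%:R * y)).
Proof.
move=> /andP[x_gt0 x_lt1] /andP[y_gt0 y_lt1].
have y_neq0 : y != 0 by rewrite gt_eqF.
have y'_neq0 : 1 - y != 0 by rewrite gt_eqF // subr_gt0.
have -> : (x - y) / (y * (1 - y)) * (ones th - q%:R * y) =
    \sum_(j < q) (x - y) / (y * (1 - y)) * ((th j : nat)%:R - y).
  by rewrite -mulr_sumr sumrB /ones sumr_const card_ord mulr_natl.
rewrite /plik -prodf_div expR_sum; apply: ler_prod => j _; apply/andP; split.
  by rewrite divr_ge0 ?mulr_ge0 ?exprn_ge0 ?subr_ge0 // ltW.
apply: le_trans (expR_ge1Dx _); rewrite -subr_ge0 le0r; apply/orP; left.
by case: (th j) => /=; rewrite ?subnn ?subn0 !expr1 !expr0 ?mulr1 ?mul1r;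
  apply/eqP; field; rewrite y_neq0 y'_neq0.
Qed.

Lemma plik_mgf_le mu lam : 0 <= mu <= 1 -> `|lam| <= 1/2 ->
  \sum_(th : {ffun 'I_q -> bool}) plik th mu * expR (lam * (ones th - q%:R * mu))
    <= expR (q%:R * (2 * lam ^+ 2)).
Proof.
move=> mu01 lam_le.
pose F (b : bool) := mu ^+ b * (1 - mu) ^+ (1 - b) * expR (lam * ((b : nat)%:R - mu)).
have plikE th :
    plik th mu * expR (lam * (ones th - q%:R * mu)) = \prod_(j < q) F (th j).
  rewrite /plik /F [RHS]big_split /= -expR_sum -mulr_sumr sumrB /ones sumr_const.
  by rewrite card_ord mulr_natl.
under eq_bigr do rewrite plikE.
rewrite -(bigA_distr_bigA (fun _ => F)) /=.
under eq_bigr do rewrite big_bool.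
rewrite prodr_const card_ord expRM_natl.
apply: lerXn2r; rewrite ?nnegrE ?expR_ge0 //.
  case/andP: mu01 => ? ?.
  by rewrite /F addr_ge0 // !mulr_ge0 ?exprn_ge0 ?expR_ge0 ?subr_ge0.
rewrite /F /= !expr1 !expr0 mulr1 mul1r sub0r mulrN.
exact: bernoulli_mgf_le.
Qed.

Lemma expR_norm_le lam (z : R) : 0 <= lam ->
  expR (lam * `|z|) <= expR (lam * z) + expR (- (lam * z)).
Proof.
move=> lam_ge0; case: (lerP 0 z) => [z_ge0 | z_lt0].
  by rewrite ger0_norm // lerDl expR_ge0.
by rewrite ltr0_norm // mulrN lerDr expR_ge0.
Qed.

Lemma plik_deviation_le mu lam (D : R) (P : pred {ffun 'I_q -> bool}) :
  0 <= mu <= 1 -> 0 <= lam <= 1/2 ->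
  (forall th, P th -> D < `|ones th - q%:R * mu|) ->
  \sum_(th | P th) plik th mu <= 2 * expR (q%:R * (2 * lam ^+ 2) - lam * D).
Proof.
move=> mu01 /andP[lam_ge0 lam_le] P_dev.
pose Z th := ones th - q%:R * mu.
have plik_mu_ge0 th : 0 <= plik th mu := plik_ge0 th mu01.
have markov th : (if P th then plik th mu else 0) <=
    expR (- (lam * D)) * (plik th mu * expR (lam * Z th)
                          + plik th mu * expR ((- lam) * Z th)).
  case: ifP => [/P_dev dev | _]; last first.
    by rewrite mulr_ge0 ?expR_ge0 // addr_ge0 // mulr_ge0 // expR_ge0.
  rewrite -mulrDr mulrCA ler_peMr // mulNr.
  apply: le_trans _ (ler_wpM2l (expR_ge0 _) (expR_norm_le (Z th) lam_ge0)).
  by rewrite -expRD -expR0 ler_expR addrC -mulrBr mulr_ge0 // subr_ge0 ltW.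
rewrite big_mkcond /=; apply: le_trans (ler_sum _ (fun th _ => markov th)) _.
rewrite -mulr_sumr big_split /= mulrC expRD mulrA ler_pM2r ?expR_gt0 //.
have lam_norm : `|lam| <= 1/2 by rewrite ger0_norm.
have := plik_mgf_le mu01 lam_norm.
have := @plik_mgf_le mu (- lam) mu01; rewrite normrN sqrrN => /(_ lam_norm).
lra.
Qed.

Lemma plik_ratio_le_of_close th x y mu (d D : R) :
  0 < x < 1 -> 1/5 <= y * (1 - y) ->
  `|x - y| <= 4 * d -> `|mu - y| <= 4 * d -> `|ones th - q%:R * mu| <= D ->
  plik th x / plik th y <= expR (20 * d * (D + 4 * q%:R * d)).
Proof.
move=> x01 var_ge xy_le muy_le dev_le.
have y01 : 0 < y < 1 by apply/andP; split; nra.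
have var_gt0 : 0 < y * (1 - y) by lra.
apply: le_trans (plik_ratio_le th x01 y01) _; rewrite ler_expR.
have dev_y_le : `|ones th - q%:R * y| <= D + 4 * q%:R * d.
  rewrite (_ : ones th - q%:R * y = ones th - q%:R * mu + q%:R * (mu - y)); last by ring.
  apply: le_trans (ler_normD _ _) _; rewrite normrM ger0_norm ?ler0n //.
  have := ler_wpM2l (ler0n R q) muy_le; lra.
apply: le_trans (ler_norm _) _.
rewrite normrM normf_div (gtr0_norm var_gt0) mulrAC ler_pdivrMr //.
have := ler_pM (normr_ge0 _) (normr_ge0 _) xy_le dev_y_le.
have d_ge0 : 0 <= d by have := normr_ge0 (x - y); lra.
have : 0 <= 4 * d * (D + 4 * q%:R * d).
  by rewrite mulr_ge0 ?(le_trans (normr_ge0 _) dev_y_le) //; lra.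
nra.
Qed.

End Likelihood.

Section LevelSet.
Variables (R : realType) (eta : R) (L l : nat).

Definition SA_fixed : R := 2 * \sum_(k < L | (1 <= 2 * k + 1 <= l)%N) eta ^- (2 * k + 1).

Let inv_bound : 2 <= eta -> 0 <= eta^-1 <= 1/2.
Proof.
move=> eta_ge2; have eta_gt0 : 0 < eta by lra.
by rewrite invr_ge0 ltW //= -[eta^-1]mul1r ler_pdivrMr //; lra.
Qed.

Lemma SA_fixed_bound : 2 <= eta -> 0 <= SA_fixed <= 4 / eta.
Proof.
move=> /inv_bound c_bound; case/andP: (c_bound) => c_ge0 _.
have := sum_odd_powers_tail_le L 0 c_bound; rewrite expr1 => tail_le.
rewrite /SA_fixed mulr_ge0 ?sumr_ge0 //= => [|k _]; last by rewrite -exprVn exprn_ge0.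
suff : \sum_(k < L | (0 < 2 * k + 1 <= l)%N) eta ^- (2 * k + 1) <= 2 * eta^-1 by lra.
apply: le_trans tail_le.
rewrite [X in X <= _]big_mkcond [X in _ <= X]big_mkcond /=; apply: ler_sum => k _.
by rewrite addn1 ltn0Sn -exprVn; case: ifP => // _; rewrite exprn_ge0.
Qed.

Lemma SA_split x : 2 <= eta -> SA eta L l x ->
  exists2 B, x = 1/2 + SA_fixed + 2 * B & 0 <= B <= 2 * eta^-1 ^+ l.+1.
Proof.
move=> /inv_bound c_bound [X ->]; case/andP: (c_bound) => c_ge0 _.
exists (\sum_(k < L | (l < 2 * k + 1 <= L)%N) (X k)%:R * eta ^- (2 * k + 1)) => //.
rewrite sumr_ge0 => [|k _]; last by rewrite mulr_ge0 // -exprVn exprn_ge0.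
apply: le_trans (sum_odd_powers_tail_le L l c_bound).
rewrite [X in X <= _]big_mkcond [X in _ <= X]big_mkcond /=; apply: ler_sum => k _.
rewrite -exprVn; case: ifP => [/andP[-> _] | _].
  by case: (X k); rewrite ?mul1r ?mul0r ?exprn_ge0.
by case: ifP => // _; rewrite exprn_ge0.
Qed.

Lemma SA_dist x y : 2 <= eta -> SA eta L l x -> SA eta L l y ->
  `|x - y| <= 4 * eta^-1 ^+ l.+1.
Proof.
move=> eta_ge2 /(SA_split eta_ge2)[Bx -> /andP[Bx_ge0 Bx_le]].
move=> /(SA_split eta_ge2)[By -> /andP[By_ge0 By_le]].
by rewrite ler_norml; apply/andP; split; lra.
Qed.

Lemma SA_range x : 2 <= eta -> SA eta L l x -> 1/2 <= x <= 1/2 + 8 / eta.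
Proof.
move=> eta_ge2 /(SA_split eta_ge2)[B -> /andP[B_ge0 B_le]].
have /andP[A_ge0 A_le] := SA_fixed_bound eta_ge2.
have /andP[c_ge0 c_le] := inv_bound eta_ge2.
have d_le : eta^-1 ^+ l.+1 <= eta^-1 by rewrite exprS ler_piMr // exprn_ile1 //; lra.
by apply/andP; split; lra.
Qed.

End LevelSet.

Section Exponents.
Variables (R : realType) (eta : R) (l q : nat).
Hypotheses (l_gt0 : (0 < l)%N) (q_le : q%:R <= eta ^+ (2 * l - 1) / 2 ^+ 7).

Lemma ratio_exponent_le : 1 <= eta ->
  20 * eta^-1 ^+ l.+1 * (eta ^+ l / 6 + 4 * q%:R * eta^-1 ^+ l.+1) <= 4 / eta.
Proof.
move=> eta_ge1; have eta_gt0 : 0 < eta by lra.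
have /andP[c_ge0 c_le1] : 0 <= eta^-1 <= 1 by rewrite invr_ge0 ltW //= invf_le1.
move: l_gt0 q_le; case: l => // k _; rewrite mulnSr addn2 subn1 mulnC => q_le_k.
have eta_k_neq0 : eta ^+ k != 0 by rewrite expf_neq0 // gt_eqF.
have d_eta : eta^-1 ^+ k.+2 * eta ^+ k.+1 = eta^-1.
  by rewrite exprVn !exprS; field; rewrite gt_eqF.
have q_d2 : q%:R * (eta^-1 ^+ k.+2) ^+ 2 <= eta^-1 ^+ 3 / 128.
  have q_d2_eq : eta ^+ (k * 2).+1 / 2 ^+ 7 * (eta^-1 ^+ k.+2) ^+ 2 = eta^-1 ^+ 3 / 128.
    rewrite -exprM (_ : (k.+2 * 2 = (k * 2).+1 + 3)%N) ?exprD; last by rewrite !mulSnr !addn2 addn3.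
    rewrite [eta^-1 ^+ (k * 2).+1]exprVn.
    by field; rewrite gt_eqF // expf_neq0 // gt_eqF.
  by rewrite -q_d2_eq ler_wpM2r ?sqr_ge0.
have : eta^-1 ^+ 3 <= eta^-1 by rewrite exprS ler_piMr // exprn_ile1.
move: q_d2 d_eta; rewrite !expr2; lra.
Qed.

Lemma chernoff_exponent_le : 0 < eta ->
  q%:R * (2 * (eta^-1 ^+ l.-1 / 2) ^+ 2) - eta^-1 ^+ l.-1 / 2 * (eta ^+ l / 6)
    <= eta / 256 - eta / 12.
Proof.
move=> eta_gt0; move: l_gt0 q_le; case: l => // k _; rewrite mulnSr addn2 subn1 mulnC /=.
move=> q_le_k; have eta_k_neq0 : eta ^+ k != 0 by rewrite expf_neq0 // gt_eqF.
have -> : eta^-1 ^+ k / 2 * (eta ^+ k.+1 / 6) = eta / 12.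
  by rewrite exprVn exprS; field.
have q_lam2 : eta ^+ (k * 2).+1 / 2 ^+ 7 * (eta^-1 ^+ k / 2) ^+ 2 = eta / 512.
  rewrite expr_div_n -exprM exprVn exprS.
  by field; rewrite expf_neq0 // gt_eqF.
have := ler_wpM2r (sqr_ge0 (eta^-1 ^+ k / 2)) q_le_k; rewrite q_lam2; lra.
Qed.

End Exponents.

Lemma GA_of_concentrated (R : realType) (eta : R) L l q (th : {ffun 'I_q -> bool}) mu :
  1000 <= eta -> (0 < l)%N -> q%:R <= eta ^+ (2 * l - 1) / 2 ^+ 7 ->
  SA eta L l mu -> `|ones th - q%:R * mu| <= eta ^+ l / 6 -> GA eta L l th.
Proof.
move=> eta_ge l_gt0 q_le Smu dev_le.
have eta_ge2 : 2 <= eta by lra.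
have c_le : eta^-1 <= 1/1000 by rewrite -[eta^-1]mul1r ler_pdivrMr //; lra.
have ratio_le u v : SA eta L l u -> SA eta L l v ->
    plik th u / plik th v <= expR (4 / eta).
  move=> Su Sv; pose d := eta^-1 ^+ l.+1.
  apply: le_trans (_ : _ <= expR (20 * d * (eta ^+ l / 6 + 4 * q%:R * d))) _.
    apply: plik_ratio_le_of_close (SA_dist eta_ge2 Su Sv) (SA_dist eta_ge2 Smu Sv) dev_le.
    - by have := SA_range eta_ge2 Su; lra.
    - by have := SA_range eta_ge2 Sv; nra.
  by rewrite ler_expR ratio_exponent_le //; lra.
have plik_SA_gt0 u : SA eta L l u -> 0 < plik th u.
  by move=> Su; apply: plik_gt0; have := SA_range eta_ge2 Su; lra.
move=> x y Sx Sy; apply/andP; split; last exact: ratio_le.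
rewrite expRN -[plik th x / _]invrK invf_div.
by rewrite lef_pV2 ?posrE ?expR_gt0 ?divr_gt0 ?plik_SA_gt0 ?ratio_le.
Qed.

Lemma not_GA_prob_le (R : realType) (eta : R) L l q mu :
  1000 <= eta -> (0 < l)%N -> q%:R <= eta ^+ (2 * l - 1) / 2 ^+ 7 -> SA eta L l mu ->
  \sum_(th : {ffun 'I_q -> bool} | ~~ `[< GA eta L l th >]) plik th mu
    <= 2 * expR (eta / 256 - eta / 12).
Proof.
move=> eta_ge l_gt0 q_le Smu.
have eta_ge2 : 2 <= eta by lra.
have c_le : eta^-1 <= 1/1000 by rewrite -[eta^-1]mul1r ler_pdivrMr //; lra.
have mu01 : 0 <= mu <= 1 by have := SA_range eta_ge2 Smu; lra.
have lam_bound : 0 <= eta^-1 ^+ l.-1 / 2 <= 1/2.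
  have /andP[c_ge0 c_le1] : 0 <= eta^-1 <= 1 by rewrite invr_ge0; lra.
  have : eta^-1 ^+ l.-1 <= 1 by rewrite exprn_ile1.
  by rewrite divr_ge0 ?exprn_ge0 //=; lra.
have concentrated (th : {ffun 'I_q -> bool}) : ~~ `[< GA eta L l th >] ->
    eta ^+ l / 6 < `|ones th - q%:R * mu|.
  move=> /asboolPn not_GA; rewrite ltNge; apply/negP => dev_le.
  exact: not_GA (GA_of_concentrated eta_ge l_gt0 q_le Smu dev_le).
apply: le_trans (plik_deviation_le mu01 lam_bound concentrated) _.
by rewrite ler_pM2l // ler_expR chernoff_exponent_le //; lra.
Qed.

Section Numerics.
Variable R : realType.

Lemma ln_ge_of_pow2_le (x : R) k : 2 ^+ k <= x -> k%:R / 2 <= ln x.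
Proof.
move=> x_ge; have pow2_gt0 : (0 : R) < 2 ^+ k by rewrite exprn_gt0.
have : ln (2 ^+ k) <= ln x by rewrite ler_ln ?posrE // (lt_le_trans pow2_gt0).
rewrite lnXn // -[ln 2 *+ k]mulr_natr.
have := ln2_ge_half R; have := ler0n R k; nra.
Qed.

Lemma sq_ln_le_powR (x r : R) : 0 < x -> 1 < ln x -> 0 < r ->
  r <= ln x / (24 * ln (ln x)) -> ln x ^+ 2 <= x `^ (1 / (12 * r)).
Proof.
move=> x_gt0 ln_gt1 r_gt0 r_le; have lnln_gt0 : 0 < ln (ln x) by rewrite ln_gt0.
rewrite /powR gt_eqF // -[ln x ^+ 2]lnK ?posrE ?exprn_gt0 ?(lt_trans ltr01) //.
rewrite lnXn ?(lt_trans ltr01) // ler_expR -mulr_natr mul1r mulrC ler_pdivlMr ?mulr_gt0 //.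
by move: r_le; rewrite ler_pdivlMr ?mulr_gt0 //; lra.
Qed.

Lemma level_gt0 (eta : R) l q : 1 <= eta -> eta ^+ 3 <= q%:R ->
  q%:R <= eta `^ (2 * l%:R - 1) / 2 ^+ 7 -> (0 < l)%N.
Proof.
case: l => // eta_ge1 q_ge; rewrite mulr0 sub0r powRN powRr1; last by lra.
have : eta^-1 <= 1 by rewrite invf_le1 //; lra.
have : 1 <= eta ^+ 3 by rewrite exprn_ege1.
rewrite -natrX; lra.
Qed.

Lemma tail_le_expR (u eta : R) : 131 <= u -> u ^+ 2 <= eta ->
  2 * expR (eta / 256 - eta / 12) <= expR (- (10 * u)).
Proof.
move=> u_ge eta_ge.
have exponent_le : eta / 256 - eta / 12 <= - (10 * u) - 1.
  have : 131 * u <= u ^+ 2 by rewrite expr2; nra.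
  lra.
have two_le_e : 2 <= expR (1 : R) by have := expR_ge1Dx (1 : R); lra.
apply: le_trans (_ : 2 * expR (- (10 * u) - 1) <= _).
  by rewrite ler_pM2l ?ler_expR.
rewrite expRD mulrCA ler_piMr ?expR_ge0 //.
by rewrite expRN ler_pdivrMr ?expR_gt0 // mul1r.
Qed.

End Numerics.

Theorem lemma7 (R : realType) :
  exists N0 : nat, forall n : nat, (N0 <= n)%N ->
  forall r : nat, (1 <= r)%N ->
    (r%:R : R) <= ln (n%:R : R) / (24 * ln (ln (n%:R : R))) ->
  forall l : nat, (l <= 6 * r)%N ->
  forall q : nat,
    ((n%:R : R) `^ (1 / (2 * (6 * r)%N)%:R)) ^+ 3 <= q%:R ->
    q%:R <= ((n%:R : R) `^ (1 / (2 * (6 * r)%N)%:R)) `^ (2 * l%:R - 1) / 2 ^+ 7 ->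
  (* sigma^A : a probability distribution with support exactly S_l^A,
     given by a duplicate-free enumeration s of S_l^A and weights w *)
  forall (s : seq R) (w : R -> R),
    uniq s ->
    (forall x, x \in s <-> SA ((n%:R : R) `^ (1 / (2 * (6 * r)%N)%:R)) (6 * r) l x) ->
    (forall x, x \in s -> 0 < w x) ->
    \sum_(x <- s) w x = 1 ->
    \sum_(x <- s) w x *
      (\sum_(th : {ffun 'I_q -> bool}
             | ~~ `[< GA ((n%:R : R) `^ (1 / (2 * (6 * r)%N)%:R)) (6 * r) l th >])
         plik th x)
    <= (n%:R : R) ^- 10.
Proof.
exists (2 ^ 262)%N => n n_ge r r_ge1 r_le l _ q q_ge q_le s w _ s_SA w_gt0 w_sum.
have n_gt0 : (0 : R) < n%:R by rewrite ltr0n; apply: leq_trans n_ge; rewrite expn_gt0.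
(* [n_ge] is cleared first: [lra] would otherwise try to evaluate [2 ^ 262]. *)
have {n_ge} ln_n_ge : 131 <= ln (n%:R : R).
  by move: n_ge; rewrite -(ler_nat R) natrX => /ln_ge_of_pow2_le; lra.
have eta_ge : ln n%:R ^+ 2 <= n%:R `^ (1 / (2 * (6 * r))%N%:R) :> R.
  by rewrite mulnA natrM sq_ln_le_powR // ?ltr0n //; lra.
move: (n%:R `^ _) => eta in eta_ge q_ge q_le s_SA *.
have eta_ge1000 : 1000 <= eta by nra.
have l_gt0 : (0 < l)%N by apply: level_gt0 q_ge q_le; lra.
have {}q_le : q%:R <= eta ^+ (2 * l - 1) / 2 ^+ 7.
  by rewrite -powR_mulrn ?natrB ?natrM ?muln_gt0 //; lra.
have -> : n%:R ^- 10 = expR (- (10 * ln (n%:R : R))).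
  by rewrite expRN expRM_natl lnK.
apply: weighted_sum_le => [x /w_gt0/ltW | x /s_SA S_x |] //.
apply: le_trans (not_GA_prob_le eta_ge1000 l_gt0 q_le S_x) _.
exact: tail_le_expR.
Qed.
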